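(* For all integers $n-2\ge k\ge0$, $$(n)_2\,\Lambda_{n-2,k}(\alpha)=\Lambda_{n,k+2}(\alpha)-(4k+6)\,\Lambda_{n,k+1}(\alpha).$$
   Context: Let $(\alpha_n)_{n\ge0}$ be an arbitrary sequence of complex numbers. For $n\ge k\ge0$ define $\Lambda_{n,k}(\alpha)=\sum_{\nu=0}^{k}\binom{n}{\nu}(2k-\nu)_k\,\alpha_{n-\nu}$, where $(m)_k=m(m-1)\cdots(m-k+1)$ is the falling factorial; $(n)_2=n(n-1)$. *)

From mathcomp Require Import all_boot all_order all_algebra.
From mathcomp Require Import complex.
From mathcomp Require Import reals.
Set Implicit Arguments. Unset Strict Implicit. Unset Printing Implicit Defensive.
Import GRing.Theory.
Local Open Scope ring_scope.

Definition Lambda (C : comRingType) (alpha : nat -> C) (n k : nat) : C :=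
  \sum_(0 <= nu < k.+1) (('C(n, nu) * ((2 * k - nu) ^_ k))%N)%:R * alpha (n - nu)%N.

From mathcomp Require Import all_boot all_order all_algebra.
From mathcomp Require Import complex.
From mathcomp Require Import reals.
From mathcomp Require Import ring zify.
Import GRing.Theory.

(* Pad Λ_{n,k+1} with its vanishing term ν = k+2, so that both Λ's on the
   right run over 0 <= ν <= k+2.  Writing a = 2k+2-ν, the coefficients of
   α_{n-ν} combine through the falling-factorial identity
     (a+2)_{k+2} = (ν)_2 (a)_k + (4k+6) (a)_{k+1},
   so the right-hand side equals Σ_ν C(n,ν) (ν)_2 (2k+2-ν)_k α_{n-ν}.
   The terms ν = 0, 1 vanish, and after the shift ν = i+2 the identity
   (n)_2 C(n-2,i) = C(n,i+2) (i+2)_2 matches the remaining sum termwise with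
   (n)_2 Λ_{n-2,k}.  The identity holds over any commutative ring and only
   needs n >= 2. *)

Lemma ffact2_bin (m i : nat) :
  (m.+2 ^_ 2 * 'C(m, i) = 'C(m.+2, i.+2) * i.+2 ^_ 2)%N.
Proof.
have diag1 := mul_bin_diag m.+1 i.
have diag2 := mul_bin_diag m.+2 i.+1.
rewrite /= in diag1 diag2.
rewrite [m.+2 ^_ 2]ffactSS [i.+2 ^_ 2]ffactSS !ffactn1.
by rewrite -mulnA diag1 mulnCA diag2 mulnCA mulnA mulnC.
Qed.

(* The coefficient recurrence: with a = 2k+2-ν and ν <= k+2,
   (a+2)_{k+2} = (ν)_2 (a)_k + (4k+6) (a)_{k+1}.  It reduces, after factoring
   out (a)_k, to (a+2)(a+1) = ν(ν-1) + (4k+6)(a-k). *)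
Lemma ffact_three_term (k nu : nat) : (nu <= k.+2)%N ->
  ((2 * k.+2 - nu) ^_ k.+2
   = nu ^_ 2 * (2 * k.+1 - nu) ^_ k + (4 * k + 6) * (2 * k.+1 - nu) ^_ k.+1)%N.
Proof.
move=> le_nu.
have quadratic : (2 * k.+1 - nu).+2 * (2 * k.+1 - nu).+1
                 = nu ^_ 2 + (4 * k + 6) * (2 * k.+1 - nu - k).
  rewrite ffactnS ffactn1.
  by case: nu le_nu => [|[|nu]] /= le_nu; nia.
have -> : 2 * k.+2 - nu = (2 * k.+1 - nu).+2 by lia.
rewrite ffactSS ffactSS [_ ^_ k.+1]ffactnSr mulnA quadratic mulnDl.
by rewrite -mulnA (mulnC (_ - k)).
Qed.

Local Open Scope ring_scope.

Definition lambda_coef (n k nu : nat) : nat := ('C(n, nu) * (2 * k - nu) ^_ k)%N.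

Section LambdaIdentities.
Variables (C : comNzRingType) (alpha : nat -> C).

(* Λ_{n,k+1} may be summed up to ν = k+2, since (2k+2-(k+2))_{k+1} = (k)_{k+1} = 0. *)
Lemma Lambda_succ_pad (n k : nat) :
  Lambda alpha n k.+1
  = \sum_(0 <= nu < k.+3) (lambda_coef n k.+1 nu)%:R * alpha (n - nu)%N.
Proof.
rewrite [RHS]big_nat_recr //= /lambda_coef ffact_small; last by lia.
by rewrite muln0 mul0r addr0.
Qed.

Lemma Lambda_combination (n k : nat) :
  Lambda alpha n k.+2 - ((4 * k + 6)%N)%:R * Lambda alpha n k.+1
  = \sum_(0 <= nu < k.+3)
      (('C(n, nu) * nu ^_ 2 * (2 * k.+1 - nu) ^_ k)%N)%:R * alpha (n - nu)%N.
Proof.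
rewrite (Lambda_succ_pad n k) {1}/Lambda mulr_sumr -sumrB.
apply: eq_big_nat => nu /andP [_ lt_nu].
rewrite /lambda_coef ffact_three_term; last by lia.
rewrite !natrM !natrD !natrM.
ring.
Qed.

End LambdaIdentities.

Theorem mainTheorem15 (R : realType) (alpha : nat -> R[i]) (n k : nat) :
  (k <= n - 2)%N -> (2 <= n)%N ->
  ((n ^_ 2)%N)%:R * Lambda alpha (n - 2) k
  = Lambda alpha n k.+2 - ((4 * k + 6)%N)%:R * Lambda alpha n k.+1.
Proof.
case: n => [|[|m]] // _ _.
rewrite Lambda_combination big_nat_recl // big_nat_recl //.
have [-> ->] : (0 ^_ 2 = 0 /\ 1 ^_ 2 = 0)%N by [].
rewrite !muln0 !mul0n !mul0r !add0r subn2 /= mulr_sumr.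
apply: eq_big_nat => i _.
have -> : (2 * k.+1 - i.+2 = 2 * k - i)%N by lia.
by rewrite mulrA -natrM mulnA ffact2_bin mulnAC subSS.
Qed.
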